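(* Under the standing setting and assumptions (A1)–(A3) described in the context, fix $X\in\mathcal X$ and assume the set-valued map $\mathcal F:\mathcal X\rightrightarrows\mathcal M$, $\mathcal F(Y)=\{Z\in\mathcal M: Y+Z\in\mathcal A\}$, is lower semicontinuous at $X$. Then $\mathcal R_\varepsilon$ is lower semicontinuous at $X$ for every $\varepsilon>0$.
   Context: Let $\mathcal X$ be a Hausdorff, first countable, locally convex topological vector space over $\mathbb R$, partially ordered by a partial order $\geq$ with positive cone $\mathcal X_+=\{X\in\mathcal X: X\geq 0\}$. Let $\mathcal M\subset\mathcal X$ be a vector subspace with $1<\dim\mathcal M<\infty$, carrying the relative topology, and let $\pi:\mathcal M\to\mathbb R$ be linear. Standing assumptions: (A1) there is $U\in\mathcal M\cap\mathcal X_+$ with $\pi(U)=1$; (A2) $\mathcal A\subsetneq\mathcal X$ is closed, contains $0$, and satisfies $\mathcal A+\mathcal X_+\subset\mathcal A$; (A3) the map $\rho(X)=\inf\{\pi(Z): Z\in\mathcal M,\ X+Z\in\mathcal A\}$ is finitely valued and continuous on $\mathcal X$. For $\varepsilon>0$, $\mathcal R_\varepsilon(X)=\{Z\in\mathcal M: X+Z\in\mathcal A,\ \pi(Z)<\rho(X)+\varepsilon\}$. A set-valued map $\mathcal S:\mathcal X\rightrightarrows\mathcal M$ is lower semicontinuous at $X$ if for every open $\mathcal U\subset\mathcal M$ with $\mathcal S(X)\cap\mathcal U\neq\emptyset$ there is an open neighborhood $\mathcal U_X$ of $X$ with $\mathcal S(Y)\cap\mathcal U\neq\emptyset$ for all $Y\in\mathcal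 U_X$. *)

From HB Require Import structures.
From mathcomp Require Import all_boot all_order all_algebra.
From mathcomp Require Import all_classical all_reals all_analysis.
Set Implicit Arguments. Unset Strict Implicit. Unset Printing Implicit Defensive.
Import Order.TTheory GRing.Theory Num.Theory.
Local Open Scope classical_set_scope.
Local Open Scope ring_scope.

Definition first_countable (T : topologicalType) : Prop :=
  forall x : T, exists B : nat -> set T,
    (forall n, open (B n) /\ B n x) /\
    (forall U, nbhs x U -> exists n, B n `<=` U).

Definition is_partial_order (T : Type) (ge : T -> T -> Prop) : Prop :=
  (forall x, ge x x) /\
  (forall x y, ge x y -> ge y x -> x = y) /\
  (forall x y z, ge x y -> ge y z -> ge x z).

Definition subspace_with_basis (R : realType) (V : lmodType R) (M : set V)
    (n : nat) (b : 'I_n -> V) : Prop :=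
  (forall c : 'I_n -> R, \sum_(i < n) c i *: b i = 0 -> forall i, c i = 0) /\
  M = [set x | exists c : 'I_n -> R, x = \sum_(i < n) c i *: b i].

Definition linear_on (R : realType) (V : lmodType R) (M : set V)
    (pi : V -> R) : Prop :=
  forall (a : R) (x y : V), M x -> M y -> pi (a *: x + y) = a * pi x + pi y.

Definition acc_map (R : realType) (V : lmodType R) (M A : set V) (Y : V) : set V :=
  [set Z | M Z /\ A (Y + Z)].

Definition rho_set (R : realType) (V : lmodType R) (M A : set V) (pi : V -> R)
    (Y : V) : set R := pi @` acc_map M A Y.

Definition rho (R : realType) (V : lmodType R) (M A : set V) (pi : V -> R)
    (Y : V) : R := inf (rho_set M A pi Y).

Definition R_eps (R : realType) (V : lmodType R) (M A : set V) (pi : V -> R)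
    (eps : R) (Y : V) : set V :=
  [set Z | M Z /\ A (Y + Z) /\ pi Z < rho M A pi Y + eps].

(* Lower semicontinuity at X of S : V ⇉ M, where M carries the relative
   topology: open subsets of M are exactly the sets M ∩ W with W open in V. *)
Definition lsc_at (T : topologicalType) (M : set T) (S : T -> set T) (X : T) : Prop :=
  forall W : set T, open W ->
    S X `&` (M `&` W) !=set0 ->
    exists UX : set T, open UX /\ UX X /\
      forall Y, UX Y -> S Y `&` (M `&` W) !=set0.

From HB Require Import structures.
From mathcomp Require Import all_boot all_order all_algebra.
From mathcomp Require Import all_classical all_reals all_analysis.
From mathcomp Require Import lra.
Import Order.TTheory GRing.Theory Num.Theory.
Import numFieldTopology.Exports numFieldNormedType.Exports.
Local Open Scope classical_set_scope.
Local Open Scope ring_scope.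

(* Cash additivity, rho (Y + Z) = rho Y - pi Z for Z in M, rewrites the
   condition pi Z < rho Y + eps defining R_eps(Y) as -eps < rho (Y + Z).
   By continuity of rho this is an open condition on the pair (Y, Z), and
   cutting a lower semicontinuous set-valued map down by an open condition on
   its graph keeps it lower semicontinuous.  Only (A3), the subspace structure
   of M and the linearity of pi are used, and eps > 0 is not. *)

Section CashAdditivity.
Variables (R : realType) (V : lmodType R) (M A : set V) (n : nat)
  (b : 'I_n -> V) (pi : V -> R).
Hypotheses (hM : subspace_with_basis M b) (hpi : linear_on M pi)
  (rho_finite : forall Y, rho_set M A pi Y !=set0 /\ has_lbound (rho_set M A pi Y)).

Lemma subspace_with_basis_linear_closed (a : R) (x y : V) : M x -> M y -> M (a *: x + y).
Proof.
case: hM => _ -> [c ->] [d ->]; exists (fun i => a * c i + d i).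
rewrite scaler_sumr -big_split /=; apply: eq_bigr => i _.
by rewrite scalerDl scalerA.
Qed.

Lemma rho_translate_le (a : R) (Y Z : V) :
  M Z -> rho M A pi (Y + a *: Z) + a * pi Z <= rho M A pi Y.
Proof.
move=> MZ; rewrite [X in _ <= X]/rho; apply: lb_le_inf; first exact: (rho_finite Y).1.
move=> _ [W [MW AW] <-].
have MW' : M ((- a) *: Z + W) by exact: subspace_with_basis_linear_closed.
suff : rho M A pi (Y + a *: Z) <= pi ((- a) *: Z + W).
  by rewrite hpi // mulNr; lra.
rewrite /rho; apply: ge_inf; first exact: (rho_finite _).2.
exists ((- a) *: Z + W) => //; split => //.
by rewrite addrA scaleNr addrK.
Qed.

Lemma rho_translate (Y Z : V) : M Z -> rho M A pi (Y + Z) = rho M A pi Y - pi Z.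
Proof.
move=> MZ; apply/eqP; rewrite eq_le; apply/andP; split.
  by have := rho_translate_le 1 Y _ MZ; rewrite scale1r mul1r; lra.
have := rho_translate_le (-1) (Y + Z) _ MZ.
by rewrite scaleN1r addrK mulN1r; lra.
Qed.

Lemma R_epsE (eps : R) (Y : V) :
  R_eps M A pi eps Y = acc_map M A Y `&` [set Z | - eps < rho M A pi (Y + Z)].
Proof.
apply/seteqP; split => Z /=.
  by move=> [MZ [AZ ltZ]]; split => //; rewrite rho_translate //; lra.
by move=> [[MZ AZ]]; rewrite rho_translate // => ltZ; split => //; split => //; lra.
Qed.

End CashAdditivity.

Arguments R_epsE {R V M A n b pi}.

Lemma lsc_atI_open (T : topologicalType) (M : set T) (S : T -> set T)
    (O : set (T * T)) (X : T) :
  open O -> lsc_at M S X -> lsc_at M (fun Y => S Y `&` [set Z | O (Y, Z)]) X.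
Proof.
rewrite openE => oO hS W oW [Z [[SZ OXZ] [MZ WZ]]].
have [[B1 B2] /= [nB1 nB2] B12] := oO _ OXZ.
move: nB1 nB2; rewrite !nbhsE => -[U1 [oU1 U1X] U1B1] [U2 [oU2 U2Z] U2B2].
have [UX [oUX [UXX hUX]]] := hS (W `&` U2) (openI oW oU2)
  (ex_intro _ Z (conj SZ (conj MZ (conj WZ U2Z)))).
exists (UX `&` U1); split; first exact: openI.
split=> // Y [UXY U1Y].
have [Z' [SZ' [MZ' [WZ' U2Z']]]] := hUX Y UXY.
exists Z'; split=> //; split=> //.
by apply: (B12 (Y, Z')); split; [exact: U1B1 | exact: U2B2].
Qed.

Theorem mainTheorem18 (R : realType) (V : tvsType R)
    (ge : V -> V -> Prop) (M : set V) (n : nat) (b : 'I_n -> V)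
    (pi : V -> R) (A : set V) (X : V) :
  hausdorff_space V ->
  first_countable V ->
  is_partial_order ge ->
  (1 < n)%N ->
  subspace_with_basis M b ->
  linear_on M pi ->
  (* (A1) *)
  (exists U : V, M U /\ ge U 0 /\ pi U = 1) ->
  (* (A2) *)
  closed A -> A 0 -> A <> setT ->
  (forall Y P : V, A Y -> ge P 0 -> A (Y + P)) ->
  (* (A3) rho finitely valued and continuous *)
  (forall Y : V, rho_set M A pi Y !=set0 /\ has_lbound (rho_set M A pi Y)) ->
  continuous (fun Y : V => rho M A pi Y) ->
  lsc_at M (acc_map M A) X ->
  forall eps : R, 0 < eps -> lsc_at M (R_eps M A pi eps) X.
Proof.
move=> _ _ _ _ hM hpi _ _ _ _ _ rho_finite rho_cont hF eps _.
have rho_sum_cont : continuous (fun p : V * V => rho M A pi (p.1 + p.2)).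
  move=> p; apply: (@continuous_comp _ _ _ (fun q : V * V => q.1 + q.2)).
    exact: add_continuous.
  exact: rho_cont.
have open_cond : open [set p : V * V | - eps < rho M A pi (p.1 + p.2)].
  exact: (open_comp (fun p _ => rho_sum_cont p) (@open_gt R (- eps))).
have -> : R_eps M A pi eps =
    fun Y => acc_map M A Y `&` [set Z | - eps < rho M A pi (Y + Z)].
  by apply: funext => Y; rewrite (R_epsE hM hpi rho_finite).
exact: lsc_atI_open open_cond hF.
Qed.
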